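(* Let $m=1$, with adjoint field $c^*$, let $c_{\lim}<0$, $k>0$, $\beta\ge0$, $$\mathcal S=\{S\in\mathcal M^+: S\{c^*<k\}\ge\beta S\{c^*\ge k\}\},\qquad M_{\lim}=\frac{-c_{\lim}}{k+\beta\inf c^*}.$$ Then $\{c^*\ge k\}$ is a prior $(S^*,-c_{\lim},\mathcal S,M_{\lim})$-footprint and a posterior $(S^*,c_{\lim},\mathcal S,M_{\lim})$-zero footprint. (If $\beta=0$ then $\mathcal S=\mathcal M^+$.)
   Context: Let $T\subset\mathbb{R}$ be a time interval, $V\subset\mathbb{R}^3$ a spatial domain, and $\mathcal M^+$ the set of positive measures on the Borel sets of $T\times V$. A measurement tuple consists of $m\ge1$ nonnegative measurable functions $c_1^*,\dots,c_m^*$ on $T\times V$ (the adjoint concentration fields $c_j^*(s,y)=\int_{T\times V}p(t,x;s,y)\,dS_j^*(t,x)$ of sensor probability measures $S_j^*$, $p$ being the transition probability of the dispersion; we write $S^*=(S_1^*,\dots,S_m^* )$) together with a vector $c_{\lim}=(c_{\lim,1},\dots,c_{\lim,m})$ of nonzero reals. Write $\langle S,c^*\rangle=\int c^*\,dS$. A measure $S\in\mathcal M^+$ satisfies the measurement condition for $(S^*,c_{\lim})$ if for every $j$: $\langle S,c_j^*\rangle\ge c_{\lim,j}$ when $c_{\lim,j}>0$ (detection), and $\langle S,c_j^*\rangle<|c_{\lim,j}|$ when $c_{\lim,j}<0$ (non-detection). Given an admissible class $\mathcal S\subseteq\mathcal M^+$ and $M_{\lim}\in\mathbb R$, a measurable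 set $A\subseteq T\times V$ is: a posterior $(S^*,c_{\lim},\mathcal S,M_{\lim})$-footprint if every $S\in\mathcal S$ satisfying the measurement condition has $S(A)\ge M_{\lim}$; a prior $(S^*,c_{\lim},\mathcal S,M_{\lim})$-footprint if every $S\in\mathcal S$ with $S(A)\ge M_{\lim}$ satisfies the measurement condition; a posterior $(S^*,c_{\lim},\mathcal S,M_{\lim})$-zero footprint if every $S\in\mathcal S$ satisfying the measurement condition has $S(A)<M_{\lim}$; a prior $(S^*,c_{\lim},\mathcal S,M_{\lim})$-zero footprint if every $S\in\mathcal S$ with $S(A)<M_{\lim}$ satisfies the measurement condition. Suprema, infima and level sets $\{c^*\ge k\}=\{(s,y):c^*(s,y)\ge k\}$ are over $T\times V$. *)

From Stdlib Require Import Reals Lra List Classical ClassicalEpsilon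
  ClassicalDescription.
Open Scope R_scope.

Definition R3 : Type := (R * R * R)%type.
Definition pt : Type := (R * R3)%type.

Definition inTV (T : R -> Prop) (V : R3 -> Prop) (p : pt) : Prop :=
  T (fst p) /\ V (snd p).

Definition open4 (U : pt -> Prop) : Prop :=
  forall p, U p -> exists eps, 0 < eps /\
    forall q : pt,
      Rabs (fst q - fst p) < eps ->
      Rabs (fst (fst (snd q)) - fst (fst (snd p))) < eps ->
      Rabs (snd (fst (snd q)) - snd (fst (snd p))) < eps ->
      Rabs (snd (snd q) - snd (snd p)) < eps -> U q.

Inductive sigma_gen {X : Type} (Om : X -> Prop) (G : (X -> Prop) -> Prop)
  : (X -> Prop) -> Prop :=
| sg_base : forall A, G A -> (forall x, A x -> Om x) -> sigma_gen Om G A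
| sg_full : sigma_gen Om G Om
| sg_compl : forall A, sigma_gen Om G A ->
    sigma_gen Om G (fun x => Om x /\ ~ A x)
| sg_union : forall F : nat -> X -> Prop, (forall n, sigma_gen Om G (F n)) ->
    sigma_gen Om G (fun x => exists n, F n x).

Definition borelR : (R -> Prop) -> Prop :=
  sigma_gen (fun _ => True) open_set.

Definition borelTV (T : R -> Prop) (V : R3 -> Prop) : (pt -> Prop) -> Prop :=
  sigma_gen (inTV T V)
    (fun A => exists U, open4 U /\ forall p, A p <-> (inTV T V p /\ U p)).

Definition measurable_fun (T : R -> Prop) (V : R3 -> Prop) (f : pt -> R) : Prop :=
  forall B, borelR B -> borelTV T V (fun p => inTV T V p /\ B (f p)).

Inductive ER : Type := Fin : R -> ER | PInf : ER.

Definition ER_le (x y : ER) : Prop :=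
  match x, y with
  | Fin a, Fin b => a <= b
  | _, PInf => True
  | PInf, Fin _ => False
  end.

Definition ER_lt (x y : ER) : Prop := ER_le x y /\ x <> y.

Definition ER_add (x y : ER) : ER :=
  match x, y with
  | Fin a, Fin b => Fin (a + b)
  | _, _ => PInf
  end.

(** scaling by a real a >= 0, with convention 0 * oo = 0 *)
Definition ER_scale (a : R) (x : ER) : ER :=
  match x with
  | Fin b => Fin (a * b)
  | PInf => if Req_EM_T a 0 then Fin 0 else PInf
  end.

Definition ER_is_lub (P : ER -> Prop) (v : ER) : Prop :=
  (forall w, P w -> ER_le w v) /\
  (forall u, (forall w, P w -> ER_le w u) -> ER_le v u).

(** supremum (exists in ER for every set; chosen by epsilon) *)
Definition ER_sup (P : ER -> Prop) : ER :=
  epsilon (inhabits PInf) (ER_is_lub P).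

Fixpoint ER_partial (f : nat -> ER) (n : nat) : ER :=
  match n with
  | O => Fin 0
  | S m => ER_add (ER_partial f m) (f m)
  end.

Definition ER_series (f : nat -> ER) : ER :=
  ER_sup (fun v => exists N, v = ER_partial f N).

Definition is_pos_measure (T : R -> Prop) (V : R3 -> Prop)
  (S : (pt -> Prop) -> ER) : Prop :=
  S (fun _ => False) = Fin 0 /\
  (forall A, borelTV T V A -> ER_le (Fin 0) (S A)) /\
  (forall F : nat -> pt -> Prop,
     (forall n, borelTV T V (F n)) ->
     (forall n m x, n <> m -> F n x -> F m x -> False) ->
     S (fun x => exists n, F n x) = ER_series (fun n => S (F n))).

Definition indic (A : pt -> Prop) (x : pt) : R :=
  if excluded_middle_informative (A x) then 1 else 0.

Definition simple_val (l : list (R * (pt -> Prop))) (x : pt) : R :=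
  fold_right (fun aA acc => fst aA * indic (snd aA) x + acc) 0 l.

Definition simple_int (S : (pt -> Prop) -> ER) (l : list (R * (pt -> Prop))) : ER :=
  fold_right (fun aA acc => ER_add (ER_scale (fst aA) (S (snd aA))) acc) (Fin 0) l.

Definition integral (T : R -> Prop) (V : R3 -> Prop)
  (S : (pt -> Prop) -> ER) (f : pt -> R) : ER :=
  ER_sup (fun v => exists l : list (R * (pt -> Prop)),
    (forall aA, In aA l -> 0 <= fst aA /\ borelTV T V (snd aA)) /\
    (forall x, inTV T V x -> simple_val l x <= f x) /\
    v = simple_int S l).

(** measurement tuple of size m: adjoint fields cs j and limits clims j,
    for j < m *)
Definition measurement_condition (T : R -> Prop) (V : R3 -> Prop) (m : nat)
  (cs : nat -> pt -> R) (clims : nat -> R) (S : (pt -> Prop) -> ER) : Prop :=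
  forall j, (j < m)%nat ->
    (clims j > 0 -> ER_le (Fin (clims j)) (integral T V S (cs j))) /\
    (clims j < 0 -> ER_lt (integral T V S (cs j)) (Fin (Rabs (clims j)))).

Definition posterior_footprint T V m cs clims
  (Sadm : ((pt -> Prop) -> ER) -> Prop) (Mlim : R) (A : pt -> Prop) : Prop :=
  borelTV T V A /\
  forall S, Sadm S -> measurement_condition T V m cs clims S ->
    ER_le (Fin Mlim) (S A).

Definition prior_footprint T V m cs clims
  (Sadm : ((pt -> Prop) -> ER) -> Prop) (Mlim : R) (A : pt -> Prop) : Prop :=
  borelTV T V A /\
  forall S, Sadm S -> ER_le (Fin Mlim) (S A) ->
    measurement_condition T V m cs clims S.

Definition posterior_zero_footprint T V m cs clims
  (Sadm : ((pt -> Prop) -> ER) -> Prop) (Mlim : R) (A : pt -> Prop) : Prop :=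
  borelTV T V A /\
  forall S, Sadm S -> measurement_condition T V m cs clims S ->
    ER_lt (S A) (Fin Mlim).

Definition prior_zero_footprint T V m cs clims
  (Sadm : ((pt -> Prop) -> ER) -> Prop) (Mlim : R) (A : pt -> Prop) : Prop :=
  borelTV T V A /\
  forall S, Sadm S -> ER_lt (S A) (Fin Mlim) ->
    measurement_condition T V m cs clims S.

Definition is_inf_on (T : R -> Prop) (V : R3 -> Prop) (f : pt -> R) (i : R) : Prop :=
  (forall p, inTV T V p -> i <= f p) /\
  (forall j, (forall p, inTV T V p -> j <= f p) -> j <= i).

Definition level_ge T V (c : pt -> R) (k : R) : pt -> Prop :=
  fun p => inTV T V p /\ k <= c p.
Definition level_lt T V (c : pt -> R) (k : R) : pt -> Prop :=
  fun p => inTV T V p /\ c p < k.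

(* On T x V the field dominates the two-level step function
   k 1_{c >= k} + (inf c) 1_{c < k}.  Integrating against an admissible S,
   whose mass below level k is at least beta times its mass above, gives
   int c dS >= (k + beta inf c) S{c >= k}.  So S{c >= k} >= M_lim forces
   detection of the threshold -c_lim, and non-detection forces
   S{c >= k} < M_lim. *)
From Stdlib Require Import Reals Lra List Classical ClassicalEpsilon
  FunctionalExtensionality PropExtensionality.
Import ListNotations.
Open Scope R_scope.

Lemma ER_lub_exists (P : ER -> Prop) : (exists w, P w) -> exists v, ER_is_lub P v.
Proof.
  intros [w0 Hw0].
  destruct (classic (exists b, forall w, P w -> ER_le w (Fin b))) as [[b Hb]|Hunb].
  - set (E := fun r => P (Fin r)).
    assert (HE_bound : bound E) by (exists b; intros r Hr; exact (Hb _ Hr)).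
    assert (HE_inhab : exists x, E x).
    { destruct w0 as [r|]; [exists r; exact Hw0 | exfalso; exact (Hb _ Hw0)]. }
    destruct (completeness E HE_bound HE_inhab) as [l [Hub Hleast]].
    exists (Fin l). split.
    + intros [r|] Hw; simpl; [apply Hub; exact Hw | exact (Hb _ Hw)].
    + intros [x|] Hu; simpl; auto.
      apply Hleast. intros r Hr. exact (Hu (Fin r) Hr).
  - exists PInf. split.
    + intros [r|] _; simpl; auto.
    + intros [x|] Hu; simpl; auto.
      exfalso; apply Hunb; exists x; exact Hu.
Qed.

Lemma ER_sup_ub (P : ER -> Prop) (w : ER) : P w -> ER_le w (ER_sup P).
Proof.
  intros Hw. unfold ER_sup.
  destruct (epsilon_spec (inhabits PInf) (ER_is_lub P)
              (ER_lub_exists P (ex_intro _ w Hw))) as [Hub _].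
  exact (Hub w Hw).
Qed.

Lemma ER_le_trans (x y z : ER) : ER_le x y -> ER_le y z -> ER_le x z.
Proof. destruct x, y, z; simpl; intros; auto; try lra; contradiction. Qed.

Lemma ER_lt_or_ge (x y : ER) : ER_lt x y \/ ER_le y x.
Proof.
  destruct x as [a|], y as [b|]; simpl.
  - destruct (Rlt_or_le a b) as [Hab|Hba]; [left | right; exact Hba].
    split; [simpl; lra | intros E; injection E; lra].
  - left. split; [exact I | discriminate].
  - right; exact I.
  - right; exact I.
Qed.

Lemma ER_lt_le_false (x y : ER) : ER_lt x y -> ER_le y x -> False.
Proof.
  destruct x as [a|], y as [b|]; simpl; intros [Hle Hne] Hge;
    try contradiction; try (now apply Hne).
  simpl in Hle. apply Hne. f_equal. lra.
Qed.

Lemma ER_scale_0 (x : ER) : ER_scale 0 x = Fin 0.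
Proof.
  destruct x as [a|]; simpl.
  - now rewrite Rmult_0_l.
  - now destruct (Req_EM_T 0 0).
Qed.

Lemma borelR_lt (k : R) : borelR (fun x => x < k).
Proof.
  apply sg_base; [|auto].
  intros x Hx. unfold neighbourhood.
  assert (Hd : 0 < k - x) by lra.
  exists (mkposreal _ Hd). intros y Hy.
  apply Rabs_def2 in Hy. simpl in Hy. lra.
Qed.

Lemma borelR_ge (k : R) : borelR (fun x => k <= x).
Proof.
  replace (fun x => k <= x) with (fun x : R => True /\ ~ x < k).
  - apply sg_compl, borelR_lt.
  - apply functional_extensionality; intro x.
    apply propositional_extensionality. split; [intros [_ H]; lra | split; auto; lra].
Qed.

Lemma integral_ge_simple_int T V S (f : pt -> R) (l : list (R * (pt -> Prop))) :
  (forall aA, In aA l -> 0 <= fst aA /\ borelTV T V (snd aA)) ->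
  (forall x, inTV T V x -> simple_val l x <= f x) ->
  ER_le (simple_int S l) (integral T V S f).
Proof. intros Hl Hbelow. apply ER_sup_ub. exists l; auto. Qed.

Section LevelSplit.

Variables (T : R -> Prop) (V : R3 -> Prop) (c : pt -> R) (k beta cinf : R).
Hypothesis Hc_meas : measurable_fun T V c.
Hypothesis Hk : 0 < k.
Hypothesis Hbeta : 0 <= beta.
Hypothesis Hinf : is_inf_on T V c cinf.

Let A := level_ge T V c k.
Let B := level_lt T V c k.
Let step := [(k, A); (cinf, B)].

Lemma borel_level_ge : borelTV T V A.
Proof. exact (Hc_meas _ (borelR_ge k)). Qed.

Lemma borel_level_lt : borelTV T V B.
Proof. exact (Hc_meas _ (borelR_lt k)). Qed.

Lemma step_below_field (x : pt) : inTV T V x -> simple_val step x <= c x.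
Proof.
  intros Hx. simpl. unfold indic.
  assert (Hcinf : cinf <= c x) by exact (proj1 Hinf x Hx).
  destruct (ClassicalDescription.excluded_middle_informative (A x)) as [HA|HnA];
  destruct (ClassicalDescription.excluded_middle_informative (B x)) as [HB|HnB].
  - destruct HA, HB; lra.
  - destruct HA; lra.
  - lra.
  - exfalso. destruct (Rle_or_lt k (c x)); [apply HnA | apply HnB]; split; auto.
Qed.

Hypothesis Hcinf : 0 <= cinf.

Lemma step_int_ge_level_mass (S : (pt -> Prop) -> ER) (M : R) :
  ER_le (ER_scale beta (S A)) (S B) -> ER_le (Fin M) (S A) ->
  ER_le (Fin (M * (k + beta * cinf))) (simple_int S step).
Proof.
  intros Hadm HM. simpl.
  destruct (S A) as [a|]; simpl in *.
  - assert (Hmass : M * (k + beta * cinf) <= a * (k + beta * cinf)).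
    { apply Rmult_le_compat_r; [nra | exact HM]. }
    destruct (S B) as [b|]; simpl in *.
    + assert (cinf * (beta * a) <= cinf * b) by (apply Rmult_le_compat_l; lra).
      nra.
    + destruct (Req_EM_T cinf 0) as [->|]; simpl; [nra | exact I].
  - destruct (Req_EM_T k 0); [lra | exact I].
Qed.

Lemma integral_ge_level_mass (S : (pt -> Prop) -> ER) (M : R) :
  ER_le (ER_scale beta (S A)) (S B) -> ER_le (Fin M) (S A) ->
  ER_le (Fin (M * (k + beta * cinf))) (integral T V S c).
Proof.
  intros Hadm HM.
  apply (ER_le_trans _ _ _ (step_int_ge_level_mass S M Hadm HM)).
  apply integral_ge_simple_int; [|exact step_below_field].
  intros aA [<-|[<-|[]]]; simpl; split;
    [lra | exact borel_level_ge | exact Hcinf | exact borel_level_lt].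
Qed.

End LevelSplit.

Theorem mainTheorem8 (T : R -> Prop) (V : R3 -> Prop) (c : pt -> R)
  (clim k beta cinf : R)
  (Hc_nonneg : forall p, inTV T V p -> 0 <= c p)
  (Hc_meas : measurable_fun T V c)
  (Hclim : clim < 0) (Hk : 0 < k) (Hbeta : 0 <= beta)
  (Hinf : is_inf_on T V c cinf) :
  let Sadm := fun S => is_pos_measure T V S /\
      ER_le (ER_scale beta (S (level_ge T V c k))) (S (level_lt T V c k)) in
  let Mlim := - clim / (k + beta * cinf) in
  prior_footprint T V 1 (fun _ => c) (fun _ => - clim) Sadm Mlim (level_ge T V c k) /\
  posterior_zero_footprint T V 1 (fun _ => c) (fun _ => clim) Sadm Mlim (level_ge T V c k) /\
  (beta = 0 -> forall S, Sadm S <-> is_pos_measure T V S).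
Proof.
  intros Sadm Mlim.
  assert (Hcinf : 0 <= cinf) by exact (proj2 Hinf 0 Hc_nonneg).
  assert (Hden : 0 < k + beta * cinf) by nra.
  assert (Hdetect : forall S, Sadm S -> ER_le (Fin Mlim) (S (level_ge T V c k)) ->
            ER_le (Fin (- clim)) (integral T V S c)).
  { intros S [_ Hadm] HM.
    replace (- clim) with (Mlim * (k + beta * cinf)) by (unfold Mlim; field; lra).
    exact (integral_ge_level_mass T V c k beta cinf Hc_meas Hk Hbeta Hinf Hcinf
             S Mlim Hadm HM). }
  pose proof (borel_level_ge T V c k Hc_meas) as HA.
  split; [|split].
  - split; [exact HA|]. intros S HS HM j _.
    split; [intros _; exact (Hdetect S HS HM) | lra].
  - split; [exact HA|]. intros S HS Hmc.
    destruct (Hmc 0%nat Nat.lt_0_1) as [_ Hnondetect].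
    specialize (Hnondetect Hclim). rewrite Rabs_left in Hnondetect by lra.
    destruct (ER_lt_or_ge (S (level_ge T V c k)) (Fin Mlim)) as [Hlt|HM]; [exact Hlt|].
    exfalso. exact (ER_lt_le_false _ _ Hnondetect (Hdetect S HS HM)).
  - intros -> S. split; [intros [HS _]; exact HS|].
    intros HS. split; [exact HS|]. rewrite ER_scale_0.
    exact (proj1 (proj2 HS) _ (borel_level_lt T V c k Hc_meas)).
Qed.
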